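(* For every pair $s,t\in\{0,1\}^{<\mathbb N}$ that are independent (neither is a prefix of the other), the element $y_sy_t^{-1}$ lies in $S$.
   Context: Let $\{0,1\}^{\mathbb N}$ be the Cantor set of infinite binary sequences and $\{0,1\}^{<\mathbb N}$ the set of finite binary words, including the empty word; juxtaposition denotes concatenation, $0^n,1^n$ denote constant words. Homeomorphisms act on the right. Define $x,y$ by $00\eta\cdot x=0\eta$, $01\eta\cdot x=10\eta$, $1\eta\cdot x=11\eta$, and recursively $00\eta\cdot y=0(\eta\cdot y)$, $01\eta\cdot y=10(\eta\cdot y^{-1})$, $1\eta\cdot y=11(\eta\cdot y)$; $x_s$ (resp. $y_s$) sends $s\eta\mapsto s(\eta\cdot x)$ (resp. $s(\eta\cdot y)$) and fixes sequences not beginning with $s$. For $n\ge0$, $p_n$ is the homeomorphism with $1^k0\eta\cdot p_n=1^{k+1}0\eta$ for $0\le k\le n-1$, $1^n0\eta\cdot p_n=1^{n+1}\eta$, and $1^{n+1}\eta\cdot p_n=0\eta$. $T$ is the group generated by all $x_s$ and all $p_n$, and $S=\langle T,\ y_{10}y_{110}^{-1}\rangle$. *)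

From mathcomp Require Import all_boot.
Set Implicit Arguments. Unset Strict Implicit. Unset Printing Implicit Defensive.

(* The Cantor set {0,1}^N : infinite binary sequences, false = 0, true = 1. *)
Definition cantor := nat -> bool.
(* Finite binary words are [seq bool]; homeomorphisms are functions
   cantor -> cantor, applied on the right: eta . (g h) = h (g eta). *)

Definition shift (n : nat) (xi : cantor) : cantor := fun i => xi (n + i).

Definition prepend (w : seq bool) (xi : cantor) : cantor :=
  fun i => if i < size w then nth false w i else xi (i - size w).

Definition hasprefix (w : seq bool) (xi : cantor) : bool :=
  all (fun i => xi i == nth false w i) (iota 0 (size w)).

Definition local (s : seq bool) (f : cantor -> cantor) : cantor -> cantor :=
  fun xi => if hasprefix s xi then prepend s (f (shift (size s) xi)) else xi.

Definition xmap (xi : cantor) : cantor :=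
  if xi 0 then prepend [:: true; true] (shift 1 xi)
  else if xi 1 then prepend [:: true; false] (shift 2 xi)
  else prepend [:: false] (shift 2 xi).

(* y and y^{-1}, given by their mutually recursive definitions, realised as a
   two-state transducer (state false = y, state true = y^{-1}):
     00eta.y = 0(eta.y), 01eta.y = 10(eta.y^{-1}), 1eta.y = 11(eta.y);
     0eta.y^{-1} = 00(eta.y^{-1}), 10eta.y^{-1} = 01(eta.y),
     11eta.y^{-1} = 1(eta.y^{-1}).
   One step returns (output word, number of input letters read, next state). *)
Definition ystep (inv : bool) (xi : cantor) : seq bool * nat * bool :=
  if ~~ inv then
    (if xi 0 then ([:: true; true], 1, false)
     else if xi 1 then ([:: true; false], 2, true)
     else ([:: false], 2, false))
  else
    (if xi 0 then
       (if xi 1 then ([:: true], 2, true) else ([:: false; true], 2, false))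
     else ([:: false; false], 1, true)).

Fixpoint yrun (n : nat) (inv : bool) (xi : cantor) : seq bool :=
  match n with
  | 0 => [::]
  | n'.+1 =>
      let '(o, c, inv') := ystep inv xi in o ++ yrun n' inv' (shift c xi)
  end.

(* every step outputs at least one letter, so k+1 steps determine letter k *)
Definition ygen (inv : bool) (xi : cantor) : cantor :=
  fun k => nth false (yrun k.+1 inv xi) k.

Definition ymap : cantor -> cantor := ygen false.
Definition ymap_inv : cantor -> cantor := ygen true.

Definition pnmap (n : nat) (xi : cantor) : cantor :=
  if hasprefix (nseq n.+1 true) xi then prepend [:: false] (shift n.+1 xi)
  else if hasprefix (rcons (nseq n true) false) xi
       then prepend (nseq n.+1 true) (shift n.+1 xi)
  else prepend [:: true] xi.

Definition wmap (xi : cantor) : cantor :=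
  local [:: true; true; false] ymap_inv (local [:: true; false] ymap xi).

Inductive S_gen : (cantor -> cantor) -> Prop :=
  | Sgen_x (s : seq bool) : S_gen (local s xmap)
  | Sgen_p (n : nat) : S_gen (pnmap n)
  | Sgen_w : S_gen wmap.

(* S = the subgroup (of the homeomorphism group) generated by S_gen:
   words in generators and their inverses, up to pointwise equality. *)
Inductive inS : (cantor -> cantor) -> Prop :=
  | inS_id : inS id
  | inS_ext f g : inS f -> (forall xi, f xi =1 g xi) -> inS g
  | inS_mul f g : inS f -> S_gen g -> inS (fun xi => g (f xi))
  | inS_mulinv f g h : inS f -> S_gen g ->
      (forall xi, h (g xi) =1 xi) -> (forall xi, g (h xi) =1 xi) ->
      inS (fun xi => h (f xi)).

From mathcomp Require Import all_boot.
From Stdlib Require Import FunctionalExtensionality.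
Set Implicit Arguments. Unset Strict Implicit. Unset Printing Implicit Defensive.

(* Write [ydivS a b] for "y_a y_b^{-1} and its inverse y_b y_a^{-1} lie in S".
   Starting from the generator y_{10} y_{110}^{-1}, the relation spreads by
   - conjugation: an element of S carrying the disjoint cones of a, b onto
     those of a', b' turns ydivS a b into ydivS a' b' (ydivS_conj); as S acts
     transitively on proper cones (cone_equiv_true), a relation between 1u
     and 1v moves to wu, wv for every word w (ydivS_transport);
   - combined with p_1, p_2 this gives ydivS w0 w1 for all w (ydivS_siblings);
   - the self-similarity y = x y_0 y_{10}^{-1} y_{11} lets one lengthen a word
     of a related pair with disjoint cones by one letter (ydivS_extend).
   Independent s, t have the form u a s', u (~a) t', and growing the
   siblings u a, u (~a) proves the theorem. *)

Lemma cantor_ext (a b : cantor) : a =1 b -> a = b.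
Proof. exact: functional_extensionality. Qed.

Lemma prepend_nil (e : cantor) : prepend [::] e = e.
Proof. by apply: cantor_ext => i; rewrite /prepend /= subn0. Qed.

Lemma prepend_consS b a (e : cantor) i : prepend (b :: a) e i.+1 = prepend a e i.
Proof. by rewrite /prepend /= ltnS subSS. Qed.

Lemma prepend_cat a b (e : cantor) : prepend (a ++ b) e = prepend a (prepend b e).
Proof.
elim: a => [|x a IH]; first by rewrite prepend_nil.
by apply: cantor_ext => -[|i] //=; rewrite !prepend_consS IH.
Qed.

Lemma prepend2 b c (e : cantor) :
  prepend [:: b] (prepend [:: c] e) = prepend [:: b; c] e.
Proof. exact: (esym (prepend_cat [:: b] [:: c] e)). Qed.

Lemma prepend3 a b c (e : cantor) :
  prepend [:: a; b] (prepend [:: c] e) = prepend [:: a; b; c] e.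
Proof. exact: (esym (prepend_cat [:: a; b] [:: c] e)). Qed.

Lemma shift_prepend a (e : cantor) : shift (size a) (prepend a e) = e.
Proof. by apply: cantor_ext => i; rewrite /shift /prepend ltnNge leq_addr addKn. Qed.

Lemma prepend_head (x : cantor) : x = prepend [:: x 0] (shift 1 x).
Proof.
apply: cantor_ext => -[|i] //.
by rewrite prepend_consS prepend_nil /shift add1n.
Qed.

Lemma cantor_cases (P : cantor -> Prop) :
  (forall b e, P (prepend [:: b] e)) -> forall x, P x.
Proof. by move=> H x; rewrite (prepend_head x). Qed.

Lemma hasprefixP w (x : cantor) :
  reflect (forall i, i < size w -> x i = nth false w i) (hasprefix w x).
Proof.
apply: (iffP allP) => H i.
- by move=> Hi; apply/eqP/H; rewrite mem_iota.
- by rewrite mem_iota add0n => /andP[_ Hi]; apply/eqP/H.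
Qed.

Lemma hasprefix_prepend a b (e : cantor) :
  hasprefix (a ++ b) (prepend a e) = hasprefix b e.
Proof.
apply/hasprefixP/hasprefixP => H i Hi.
- have := H (size a + i); rewrite size_cat ltn_add2l nth_cat /prepend.
  by rewrite [_ + _ < _]ltnNge leq_addr /= addKn; apply.
- rewrite /prepend nth_cat; case: ifP => // /negbT; rewrite -leqNgt => Hai.
  by rewrite H // -(ltn_add2l (size a)) subnKC // -size_cat.
Qed.

Lemma hasprefix_prepend_self a (e : cantor) : hasprefix a (prepend a e).
Proof. by have := hasprefix_prepend a [::] e; rewrite cats0. Qed.

Lemma hasprefix_catl a b (x : cantor) : hasprefix (a ++ b) x -> hasprefix a x.
Proof.
move/hasprefixP=> H; apply/hasprefixP => i Hi.
by rewrite H ?nth_cat ?Hi // size_cat ltn_addr.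
Qed.

Lemma prepend_shift a (x : cantor) :
  hasprefix a x -> prepend a (shift (size a) x) = x.
Proof.
move/hasprefixP => H; apply: cantor_ext => i; rewrite /prepend.
case: ifP => Hi; first by rewrite H.
by rewrite /shift subnKC // leqNgt Hi.
Qed.

Lemma split_independent (s t : seq bool) : ~~ prefix s t -> ~~ prefix t s ->
  exists u a s' t', s = u ++ a :: s' /\ t = u ++ (~~ a) :: t'.
Proof.
elim: s t => [|x s IH] [|y t] //=.
case: (eqVneq x y) => [<-|Hxy]; rewrite ?eqxx /= => Hst Hts.
  have [u [a [s' [t' [-> ->]]]]] := IH t Hst Hts.
  by exists (x :: u), a, s', t'.
by exists [::], x, s, t; case: x y Hxy => [] [].
Qed.

Definition disj (a b : seq bool) : Prop :=
  forall x : cantor, hasprefix a x -> hasprefix b x -> False.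

Lemma disj_sym a b : disj a b -> disj b a.
Proof. by move=> D x Hb Ha; apply: (D x). Qed.

Lemma disj_catl a b q : disj a b -> disj (a ++ q) b.
Proof. by move=> D x /hasprefix_catl; apply: D. Qed.

Lemma disj_catr a b q : disj a b -> disj a (b ++ q).
Proof. by move=> D; apply/disj_sym/disj_catl/disj_sym. Qed.

Lemma disj_pfx w p q : disj p q -> disj (w ++ p) (w ++ q).
Proof.
move=> D x Hp; have Ex := prepend_shift (hasprefix_catl Hp).
by rewrite -Ex !hasprefix_prepend in Hp *; apply: D.
Qed.

Lemma disj_independent s t : ~~ prefix s t -> ~~ prefix t s -> disj s t.
Proof.
move=> Hst Hts; have [u [a [s' [t' [-> ->]]]]] := split_independent Hst Hts.
apply: disj_pfx => x /hasprefixP/(_ 0 isT) /= Ha /hasprefixP/(_ 0 isT) /=.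
by rewrite Ha; case: (a).
Qed.

Lemma disj_prepend a b (e : cantor) : disj a b -> hasprefix b (prepend a e) = false.
Proof. by move=> D; apply/negP => /(D _ (hasprefix_prepend_self a e)). Qed.

Lemma local_prepend s f (e : cantor) : local s f (prepend s e) = prepend s (f e).
Proof. by rewrite /local hasprefix_prepend_self shift_prepend. Qed.

Lemma local_out s f (x : cantor) : ~~ hasprefix s x -> local s f x = x.
Proof. by rewrite /local => /negbTE ->. Qed.

Lemma local_disj s a f (e : cantor) : disj a s -> local s f (prepend a e) = prepend a e.
Proof. by move=> D; rewrite local_out // disj_prepend. Qed.

Lemma local_comm a b f g (x : cantor) : disj a b ->
  local a f (local b g x) = local b g (local a f x).
Proof.
move=> D; have D' := disj_sym D.
case Ha: (hasprefix a x).
  by rewrite -(prepend_shift Ha) (local_disj g _ D) !local_prepend (local_disj g _ D).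
case Hb: (hasprefix b x).
  by rewrite -(prepend_shift Hb) (local_disj f _ D') !local_prepend (local_disj f _ D').
by rewrite !local_out ?Ha ?Hb.
Qed.

Lemma local_cat s q f (x : cantor) : local s (local q f) x = local (s ++ q) f x.
Proof.
case Hs: (hasprefix s x); last first.
  by rewrite !local_out ?Hs //; apply: contraFN Hs => /hasprefix_catl.
rewrite -(prepend_shift Hs) local_prepend.
case Hq: (hasprefix q (shift (size s) x)).
  by rewrite -(prepend_shift Hq) local_prepend -!prepend_cat local_prepend.
by rewrite !local_out ?hasprefix_prepend ?Hq.
Qed.

Lemma local_comp s f g (x : cantor) : local s f (local s g x) = local s (fun e => f (g e)) x.
Proof.
case Hs: (hasprefix s x); last by rewrite !local_out ?Hs.
by rewrite -(prepend_shift Hs) !local_prepend.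
Qed.

Lemma local_ext s f g (x : cantor) : f =1 g -> local s f x = local s g x.
Proof. by move=> E; rewrite /local E. Qed.

Lemma local_id s (x : cantor) : local s id x = x.
Proof.
case Hs: (hasprefix s x); last by rewrite local_out ?Hs.
by rewrite -(prepend_shift Hs) local_prepend.
Qed.

Lemma local_cancel s f g : cancel f g -> cancel (local s f) (local s g).
Proof. by move=> K x; rewrite local_comp (local_ext _ _ K) local_id. Qed.

(* The transducer defining y and y^{-1} writes a nonempty word at every step,
   so the letters of ygen are the letters of the output of its first step
   followed by the letters of ygen from the next state. *)
Lemma ystep_size inv (x : cantor) : 0 < size (ystep inv x).1.1.
Proof. by rewrite /ystep; case: inv; case: (x 0); case: (x 1). Qed.

Lemma yrunS n inv (x : cantor) : yrun n.+1 inv x =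
  (ystep inv x).1.1 ++ yrun n (ystep inv x).2 (shift (ystep inv x).1.2 x).
Proof. by rewrite /=; case: (ystep inv x) => [[o c] inv']. Qed.

Lemma yrun_prefix m d inv (x : cantor) :
  exists r, yrun (m + d) inv x = yrun m inv x ++ r.
Proof.
elim: m inv x => [|m IH] inv x; first by exists (yrun d inv x).
rewrite addSn !yrunS.
have [r ->] := IH (ystep inv x).2 (shift (ystep inv x).1.2 x).
by exists r; rewrite catA.
Qed.

Lemma yrun_size m inv (x : cantor) : m <= size (yrun m inv x).
Proof.
elim: m inv x => [|m IH] inv x //.
by rewrite yrunS size_cat -add1n leq_add // ystep_size.
Qed.

Lemma ygen_unfold inv (x : cantor) : ygen inv x =
  prepend (ystep inv x).1.1 (ygen (ystep inv x).2 (shift (ystep inv x).1.2 x)).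
Proof.
apply: cantor_ext => k; rewrite /ygen yrunS nth_cat /prepend.
case: ifP => // /negbT; rewrite -leqNgt => Hk.
have Ho := ystep_size inv x.
set o := (ystep inv x).1.1 in Ho Hk *; set j := k - size o.
have Ek : k = j.+1 + (size o).-1 by rewrite addSn -addnS prednK // subnK.
rewrite {1}Ek.
have [r ->] := yrun_prefix j.+1 (size o).-1 (ystep inv x).2
                              (shift (ystep inv x).1.2 x).
by rewrite nth_cat (leq_trans _ (yrun_size _ _ _)).
Qed.

Ltac unfold_ygen := rewrite /ymap /ymap_inv ygen_unfold /ystep ?prepend_consS /=;
  by rewrite ?(shift_prepend [:: _; _]) ?(shift_prepend [:: _]).

Lemma ymap_00 e : ymap (prepend [:: false; false] e) = prepend [:: false] (ymap e).
Proof. by unfold_ygen. Qed.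
Lemma ymap_01 e :
  ymap (prepend [:: false; true] e) = prepend [:: true; false] (ymap_inv e).
Proof. by unfold_ygen. Qed.
Lemma ymap_1 e : ymap (prepend [:: true] e) = prepend [:: true; true] (ymap e).
Proof. by unfold_ygen. Qed.
Lemma ymap_inv_0 e :
  ymap_inv (prepend [:: false] e) = prepend [:: false; false] (ymap_inv e).
Proof. by unfold_ygen. Qed.
Lemma ymap_inv_10 e :
  ymap_inv (prepend [:: true; false] e) = prepend [:: false; true] (ymap e).
Proof. by unfold_ygen. Qed.
Lemma ymap_inv_11 e :
  ymap_inv (prepend [:: true; true] e) = prepend [:: true] (ymap_inv e).
Proof. by unfold_ygen. Qed.

Definition agree n (a b : cantor) : Prop := forall k, k < n -> a k = b k.

Lemma agree_prepend m n o (a b : cantor) :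
  n <= m + size o -> agree m a b -> agree n (prepend o a) (prepend o b).
Proof.
move=> Hn H k Hk; rewrite /prepend; case: ifP => // /negbT; rewrite -leqNgt => Ho.
by apply: H; rewrite ltn_subLR // addnC (leq_trans Hk).
Qed.

(* y and y^{-1} are mutually inverse: by induction on [n], both composites
   fix the first [n] letters, since each step of one transducer is undone by
   a step of the other emitting at least one letter. *)
Lemma ymap_agree n (x : cantor) :
  agree n (ymap (ymap_inv x)) x /\ agree n (ymap_inv (ymap x)) x.
Proof.
elim: n x => [|n IH] x; first by split=> k.
split.
- elim/cantor_cases: x => [[]] e.
  + elim/cantor_cases: e => [[]] e; rewrite prepend2.
    * by rewrite ymap_inv_11 ymap_1; apply: agree_prepend (proj1 (IH e)); rewrite addn2.
    * by rewrite ymap_inv_10 ymap_01; apply: agree_prepend (proj2 (IH e)); rewrite addn2.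
  + by rewrite ymap_inv_0 ymap_00; apply: agree_prepend (proj1 (IH e)); rewrite addn1.
- elim/cantor_cases: x => [[]] e.
  + by rewrite ymap_1 ymap_inv_11; apply: agree_prepend (proj2 (IH e)); rewrite addn1.
  + elim/cantor_cases: e => [[]] e; rewrite prepend2.
    * by rewrite ymap_01 ymap_inv_10; apply: agree_prepend (proj1 (IH e)); rewrite addn2.
    * by rewrite ymap_00 ymap_inv_0; apply: agree_prepend (proj2 (IH e)); rewrite addn2.
Qed.

Lemma ymapK : cancel ymap ymap_inv.
Proof. by move=> x; apply: cantor_ext => k; apply: (proj2 (ymap_agree k.+1 x)). Qed.

Lemma ymap_invK : cancel ymap_inv ymap.
Proof. by move=> x; apply: cantor_ext => k; apply: (proj1 (ymap_agree k.+1 x)). Qed.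

Definition xmap_inv (x : cantor) : cantor :=
  if x 0 then
    (if x 1 then prepend [:: true] (shift 2 x) else prepend [:: false; true] (shift 2 x))
  else prepend [:: false; false] (shift 1 x).

Ltac unfold_map := by rewrite /= ?(shift_prepend [:: _; _; _])
  ?(shift_prepend [:: _; _]) ?(shift_prepend [:: _]) ?prepend2 ?prepend3.

Lemma xmap_00 e : xmap (prepend [:: false; false] e) = prepend [:: false] e.
Proof. by rewrite /xmap; unfold_map. Qed.
Lemma xmap_01 e : xmap (prepend [:: false; true] e) = prepend [:: true; false] e.
Proof. by rewrite /xmap; unfold_map. Qed.
Lemma xmap_1 e : xmap (prepend [:: true] e) = prepend [:: true; true] e.
Proof. by rewrite /xmap; unfold_map. Qed.
Lemma xmap_inv_0 e : xmap_inv (prepend [:: false] e) = prepend [:: false; false] e.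
Proof. by rewrite /xmap_inv; unfold_map. Qed.
Lemma xmap_inv_10 e : xmap_inv (prepend [:: true; false] e) = prepend [:: false; true] e.
Proof. by rewrite /xmap_inv; unfold_map. Qed.
Lemma xmap_inv_11 e : xmap_inv (prepend [:: true; true] e) = prepend [:: true] e.
Proof. by rewrite /xmap_inv; unfold_map. Qed.

Lemma xmapK : cancel xmap xmap_inv.
Proof.
elim/cantor_cases => [[]] e; first by rewrite xmap_1 xmap_inv_11.
elim/cantor_cases: e => [[]] e; rewrite prepend2.
- by rewrite xmap_01 xmap_inv_10.
- by rewrite xmap_00 xmap_inv_0.
Qed.

Lemma xmap_invK : cancel xmap_inv xmap.
Proof.
elim/cantor_cases => [[]] e; last by rewrite xmap_inv_0 xmap_00.
elim/cantor_cases: e => [[]] e; rewrite prepend2.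
- by rewrite xmap_inv_11 xmap_1.
- by rewrite xmap_inv_10 xmap_01.
Qed.

Lemma pnmap0_0 e : pnmap 0 (prepend [:: false] e) = prepend [:: true] e.
Proof. by rewrite /pnmap; unfold_map. Qed.
Lemma pnmap0_1 e : pnmap 0 (prepend [:: true] e) = prepend [:: false] e.
Proof. by rewrite /pnmap; unfold_map. Qed.
Lemma pnmap1_0 e : pnmap 1 (prepend [:: false] e) = prepend [:: true; false] e.
Proof. by rewrite /pnmap; unfold_map. Qed.
Lemma pnmap1_10 e : pnmap 1 (prepend [:: true; false] e) = prepend [:: true; true] e.
Proof. by rewrite /pnmap; unfold_map. Qed.
Lemma pnmap1_11 e : pnmap 1 (prepend [:: true; true] e) = prepend [:: false] e.
Proof. by rewrite /pnmap; unfold_map. Qed.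
Lemma pnmap2_0 e : pnmap 2 (prepend [:: false] e) = prepend [:: true; false] e.
Proof. by rewrite /pnmap; unfold_map. Qed.
Lemma pnmap2_10 e :
  pnmap 2 (prepend [:: true; false] e) = prepend [:: true; true; false] e.
Proof. by rewrite /pnmap -(prepend_cat [:: true] [:: true; false]). Qed.
Lemma pnmap2_110 e :
  pnmap 2 (prepend [:: true; true; false] e) = prepend [:: true; true; true] e.
Proof. by rewrite /pnmap; unfold_map. Qed.
Lemma pnmap2_111 e : pnmap 2 (prepend [:: true; true; true] e) = prepend [:: false] e.
Proof. by rewrite /pnmap; unfold_map. Qed.

Lemma inS_comp f g : inS f -> inS g -> inS (fun x => g (f x)).
Proof.
move=> Hf; elim=> [|g0 g1 _ IH E|g0 h _ IH Hh|g0 h k _ IH Hh E1 E2].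
- exact: inS_ext Hf (fun x i => erefl).
- by apply: inS_ext IH _ => x; apply: E.
- exact: inS_mul IH Hh.
- exact: inS_mulinv IH Hh E1 E2.
Qed.

Lemma inS_gen g : S_gen g -> inS g.
Proof. by move=> Hg; apply: inS_ext (inS_mul inS_id Hg) (fun x i => erefl). Qed.

Definition Sbij (f fi : cantor -> cantor) : Prop :=
  [/\ inS f, inS fi, cancel f fi & cancel fi f].

Lemma Sbij_sym f fi : Sbij f fi -> Sbij fi f.
Proof. by case=> *; split. Qed.

Lemma Sbij_id : Sbij id id.
Proof. by split=> //; exact: inS_id. Qed.

Lemma Sbij_comp f fi g gi : Sbij f fi -> Sbij g gi ->
  Sbij (fun x => g (f x)) (fun x => fi (gi x)).
Proof.
case=> Sf Sfi Kf Kfi [Sg Sgi Kg Kgi]; split; try exact: inS_comp.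
- by move=> x; rewrite Kg Kf.
- by move=> x; rewrite Kfi Kgi.
Qed.

Lemma Sbij_ext f fi g gi : Sbij f fi -> f =1 g -> cancel g gi -> cancel gi g ->
  Sbij g gi.
Proof.
case=> Sf Sfi Kf _ E Kg Kgi; split=> //.
- by apply: inS_ext Sf _ => x; rewrite E.
- by apply: inS_ext Sfi _ => x; rewrite -{1}(Kgi x) -E Kf.
Qed.

Lemma Sbij_solve_outer f fi g gi h hi : Sbij f fi -> Sbij h hi ->
  (forall x, h x = g (f x)) -> cancel g gi -> cancel gi g -> Sbij g gi.
Proof.
move=> Hf Hh E; apply: Sbij_ext (Sbij_comp (Sbij_sym Hf) Hh) _ => y.
by case: Hf => _ _ _ Kfi; rewrite /= E Kfi.
Qed.

Lemma Sbij_solve_middle f fi g gi h hi k ki : Sbij f fi -> Sbij h hi -> Sbij k ki ->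
  (forall x, k x = h (g (f x))) -> cancel g gi -> cancel gi g -> Sbij g gi.
Proof.
move=> Hf Hh Hk E.
apply: Sbij_ext (Sbij_comp (Sbij_comp (Sbij_sym Hf) Hk) (Sbij_sym Hh)) _ => y.
by case: Hf => _ _ _ Kfi; case: Hh => _ _ Kh _; rewrite /= E Kfi Kh.
Qed.

Lemma Sbij_gen g gi : S_gen g -> cancel g gi -> cancel gi g -> Sbij g gi.
Proof.
move=> Hg K Ki; split; [exact: inS_gen | | by [] | by []].
apply: inS_ext (inS_mulinv inS_id Hg _ _) (fun x i => erefl) => x i.
- by rewrite K.
- by rewrite Ki.
Qed.

Lemma Sbij_periodic g n : S_gen g -> (forall x, iter n.+1 g x = x) ->
  Sbij g (iter n g).
Proof.
move=> Hg E; have Sg := inS_gen Hg; split=> //.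
- elim: n {E} => [|n IH] /=; first exact: inS_ext inS_id (fun x i => erefl).
  exact: inS_comp IH Sg.
- by move=> x; rewrite -iterSr.
Qed.

Lemma Sbij_x v : Sbij (local v xmap) (local v xmap_inv).
Proof. exact: Sbij_gen (Sgen_x v) (local_cancel v xmapK) (local_cancel v xmap_invK). Qed.

(* p_0, p_1, p_2 permute cyclically 2, 3, 4 cones, so have orders 2, 3, 4. *)
Lemma Sbij_p0 : Sbij (pnmap 0) (pnmap 0).
Proof.
apply: (Sbij_periodic (n := 1) (Sgen_p 0)).
elim/cantor_cases => [[]] e /=.
- by rewrite pnmap0_1 pnmap0_0.
- by rewrite pnmap0_0 pnmap0_1.
Qed.

Lemma Sbij_p1 : Sbij (pnmap 1) (iter 2 (pnmap 1)).
Proof.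
apply: Sbij_periodic (Sgen_p 1) _.
elim/cantor_cases => [[]] e /=; last by rewrite pnmap1_0 pnmap1_10 pnmap1_11.
elim/cantor_cases: e => [[]] e; rewrite prepend2.
- by rewrite pnmap1_11 pnmap1_0 pnmap1_10.
- by rewrite pnmap1_10 pnmap1_11 pnmap1_0.
Qed.

Lemma Sbij_p2 : Sbij (pnmap 2) (iter 3 (pnmap 2)).
Proof.
apply: Sbij_periodic (Sgen_p 2) _.
elim/cantor_cases => [[]] e /=; last by rewrite pnmap2_0 pnmap2_10 pnmap2_110 pnmap2_111.
elim/cantor_cases: e => [[]] e; rewrite prepend2;
  last by rewrite pnmap2_10 pnmap2_110 pnmap2_111 pnmap2_0.
elim/cantor_cases: e => [[]] e; rewrite prepend3.
- by rewrite pnmap2_111 pnmap2_0 pnmap2_10 pnmap2_110.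
- by rewrite pnmap2_110 pnmap2_111 pnmap2_0 pnmap2_10.
Qed.

Definition maps_cone (g : cantor -> cantor) (c c' : seq bool) : Prop :=
  forall e, g (prepend c e) = prepend c' e.

Lemma maps_cone_inv g gi c c' : Sbij g gi -> maps_cone g c c' -> maps_cone gi c' c.
Proof. by case=> _ _ K _ H e; rewrite -H K. Qed.

Lemma maps_cone_cat g c c' q : maps_cone g c c' -> maps_cone g (c ++ q) (c' ++ q).
Proof. by move=> H e; rewrite !prepend_cat H. Qed.

Lemma maps_cone_comp g h c c' c'' : maps_cone g c c' -> maps_cone h c' c'' ->
  maps_cone (fun x => h (g x)) c c''.
Proof. by move=> Hg Hh e; rewrite Hg Hh. Qed.

Lemma maps_cone_local v f c c' :
  maps_cone f c c' -> maps_cone (local v f) (v ++ c) (v ++ c').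
Proof. by move=> H e; rewrite !prepend_cat local_prepend H. Qed.

Lemma maps_cone_disj g c d : disj d c -> maps_cone (local c g) d d.
Proof. by move=> D e; rewrite local_disj. Qed.

Lemma maps_cone_disj_image g gi a a' b b' : Sbij g gi ->
  maps_cone g a a' -> maps_cone g b b' -> disj a b -> disj a' b'.
Proof.
move=> G Ha Hb D x Ha' Hb'; apply: (D (gi x)).
- by rewrite -(prepend_shift Ha') (maps_cone_inv G Ha) hasprefix_prepend_self.
- by rewrite -(prepend_shift Hb') (maps_cone_inv G Hb) hasprefix_prepend_self.
Qed.

Definition cone_equiv (c c' : seq bool) : Prop :=
  exists g gi, Sbij g gi /\ maps_cone g c c'.

Lemma cone_equiv_refl c : cone_equiv c c.
Proof. by exists id, id; split; [exact: Sbij_id | move=> e]. Qed.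

Lemma cone_equiv_trans a b c : cone_equiv a b -> cone_equiv b c -> cone_equiv a c.
Proof.
case=> g [gi [G Cg]] [h [hi [H Ch]]]; exists (fun x => h (g x)), (fun x => gi (hi x)).
by split; [exact: Sbij_comp | exact: maps_cone_comp Cg Ch].
Qed.

Lemma cone_equiv_cat c c' q : cone_equiv c c' -> cone_equiv (c ++ q) (c' ++ q).
Proof. by case=> g [gi [G C]]; exists g, gi; split => //; exact: maps_cone_cat. Qed.

(* The children [10], [11] of [1] are reached by p_1 p_0 and x, and
   the general case follows by extending words letter by letter. *)
Lemma cone_equiv_true w : w != [::] -> cone_equiv [:: true] w.
Proof.
have C0 : cone_equiv [:: true] [:: false].
  by exists (pnmap 0), (pnmap 0); split; [exact: Sbij_p0 | exact: pnmap0_1].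
have C10 : cone_equiv [:: true] [:: true; false].
  apply: cone_equiv_trans C0 _.
  by exists (pnmap 1), (iter 2 (pnmap 1)); split; [exact: Sbij_p1 | exact: pnmap1_0].
have C11 : cone_equiv [:: true] [:: true; true].
  exists (local [::] xmap), (local [::] xmap_inv); split; first exact: Sbij_x.
  exact: (maps_cone_local [::] xmap_1).
elim/last_ind: w => [//|v b IH _]; rewrite -cats1.
case: (eqVneq v [::]) => [->|/IH Hv] /=.
  by case: b; [exact: cone_equiv_refl | exact: C0].
apply: cone_equiv_trans (cone_equiv_cat [:: b] Hv).
by case: b; [exact: C11 | exact: C10].
Qed.

Definition ydiv (a b : seq bool) (x : cantor) : cantor :=
  local b ymap_inv (local a ymap x).

Lemma ydivK a b : cancel (ydiv a b) (ydiv b a).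
Proof. by move=> x; rewrite /ydiv (local_cancel _ ymap_invK) (local_cancel _ ymapK). Qed.

Definition ydivS (a b : seq bool) : Prop := Sbij (ydiv a b) (ydiv b a).

Lemma ydivS_sym a b : ydivS a b -> ydivS b a.
Proof. exact: Sbij_sym. Qed.

(* y_s y_u^{-1} . y_u y_t^{-1} = y_s y_t^{-1} *)
Lemma ydivS_trans s u t : ydivS s u -> ydivS u t -> ydivS s t.
Proof.
move=> Hsu Hut; apply: Sbij_ext (Sbij_comp Hsu Hut) _ (ydivK s t) (ydivK t s) => x.
by rewrite /ydiv (local_cancel _ ymap_invK).
Qed.

Lemma ydiv_conj g gi a a' b b' : Sbij g gi -> maps_cone g a a' -> maps_cone g b b' ->
  disj a b -> forall x, g (ydiv a b (gi x)) = ydiv a' b' x.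
Proof.
move=> G Ha Hb Dab x.
have Dab' := maps_cone_disj_image G Ha Hb Dab.
have Dba := disj_sym Dab; have Dba' := disj_sym Dab'.
have Ha' := maps_cone_inv G Ha; have Hb' := maps_cone_inv G Hb.
case Hx: (hasprefix a' x).
  rewrite -(prepend_shift Hx) Ha' /ydiv !local_prepend.
  by rewrite (local_disj _ _ Dab) (local_disj _ _ Dab') Ha.
case Hy: (hasprefix b' x).
  rewrite -(prepend_shift Hy) Hb' /ydiv (local_disj _ _ Dba) (local_disj _ _ Dba').
  by rewrite !local_prepend Hb.
case: G => _ _ _ K.
have Na : hasprefix a (gi x) = false.
  by apply: contraFF Hx => /prepend_shift E; rewrite -(K x) -E Ha hasprefix_prepend_self.
have Nb : hasprefix b (gi x) = false.
  by apply: contraFF Hy => /prepend_shift E; rewrite -(K x) -E Hb hasprefix_prepend_self.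
by rewrite /ydiv !local_out ?Na ?Nb ?Hx ?Hy // K.
Qed.

Lemma ydivS_conj g gi a a' b b' : Sbij g gi -> maps_cone g a a' -> maps_cone g b b' ->
  disj a b -> ydivS a b -> ydivS a' b'.
Proof.
move=> G Ha Hb D Hab.
apply: Sbij_ext (Sbij_comp (Sbij_comp (Sbij_sym G) Hab) G) _ (ydivK _ _) (ydivK _ _).
exact: ydiv_conj G Ha Hb D.
Qed.

Lemma ydivS_transport u u' a b : cone_equiv u u' -> disj a b ->
  ydivS (u ++ a) (u ++ b) -> ydivS (u' ++ a) (u' ++ b).
Proof.
case=> g [gi [G C]] D; apply: ydivS_conj G (maps_cone_cat a C) (maps_cone_cat b C) _.
exact: disj_pfx.
Qed.

Lemma ydivS_10_110 : ydivS [:: true; false] [:: true; true; false].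
Proof. exact: Sbij_gen Sgen_w (ydivK _ _) (ydivK _ _). Qed.

(* Conjugating by p_2^{-1}, which maps 10 -> 0 and 110 -> 10. *)
Lemma ydivS_0_10 : ydivS [:: false] [:: true; false].
Proof.
apply: ydivS_conj (Sbij_sym Sbij_p2) (maps_cone_inv Sbij_p2 pnmap2_0)
  (maps_cone_inv Sbij_p2 pnmap2_10) _ ydivS_10_110.
exact: disj_independent.
Qed.

(* Moving the cone of [1] onto the cone of any nonempty [w]. *)
Lemma ydivS_w0_w10 w : ydivS (w ++ [:: false]) (w ++ [:: true; false]).
Proof.
have [->|Hw] := eqVneq w [::]; first exact: ydivS_0_10.
apply: ydivS_transport (cone_equiv_true Hw) _ ydivS_10_110.
exact: disj_independent.
Qed.

(* Conjugating y_{10} y_0^{-1} by p_1^{-1} (10 -> 0, 0 -> 11). *)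
Lemma ydivS_0_11 : ydivS [:: false] [:: true; true].
Proof.
apply: ydivS_conj (Sbij_sym Sbij_p1) (maps_cone_inv Sbij_p1 pnmap1_0)
  (maps_cone_inv Sbij_p1 pnmap1_11) _ (ydivS_sym ydivS_0_10).
exact: disj_independent.
Qed.

(* Conjugating y_{10} y_0^{-1} by p_2^{-1} (10 -> 0, 0 -> 111). *)
Lemma ydivS_0_111 : ydivS [:: false] [:: true; true; true].
Proof.
apply: ydivS_conj (Sbij_sym Sbij_p2) (maps_cone_inv Sbij_p2 pnmap2_0)
  (maps_cone_inv Sbij_p2 pnmap2_111) _ (ydivS_sym ydivS_0_10).
exact: disj_independent.
Qed.

Lemma ymap_decomp e : ymap e =
  local [:: true; true] ymap (local [:: true; false] ymap_inv
    (local [:: false] ymap (xmap e))).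
Proof.
have D11_0 : disj [:: true; true] [:: false] by exact: disj_independent.
have D11_10 : disj [:: true; true] [:: true; false] by exact: disj_independent.
have D10_0 : disj [:: true; false] [:: false] by exact: disj_independent.
elim/cantor_cases: e => [[]] e.
  by rewrite ymap_1 xmap_1 (local_disj _ _ D11_0) (local_disj _ _ D11_10) local_prepend.
elim/cantor_cases: e => [[]] e; rewrite prepend2.
  rewrite ymap_01 xmap_01 (local_disj _ _ D10_0) local_prepend.
  by rewrite (local_disj _ _ (disj_sym D11_10)).
rewrite ymap_00 xmap_00 local_prepend (local_disj _ _ (disj_sym D10_0)).
by rewrite (local_disj _ _ (disj_sym D11_0)).
Qed.

Lemma local_ymap_decomp w x : local w ymap x =
  local (w ++ [:: true; true]) ymap (local (w ++ [:: true; false]) ymap_inv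
    (local (w ++ [:: false]) ymap (local w xmap x))).
Proof. by rewrite -!local_cat !local_comp; apply: local_ext; exact: ymap_decomp. Qed.

Lemma ydiv_expand w t x : ydiv w t x =
  ydiv (w ++ [:: true; true]) t
    (ydiv (w ++ [:: false]) (w ++ [:: true; false]) (local w xmap x)).
Proof. by rewrite /ydiv local_ymap_decomp. Qed.

Lemma ydiv_expand_disj w t x : disj t w -> ydiv w t x =
  ydiv (w ++ [:: true; true]) (w ++ [:: true; false])
    (ydiv (w ++ [:: false]) t (local w xmap x)).
Proof.
move=> D; rewrite /ydiv local_ymap_decomp.
have D10_11 : disj (w ++ [:: true; true]) (w ++ [:: true; false]).
  exact/disj_pfx/disj_independent.
by rewrite (local_comm _ _ _ (disj_catr D)) (local_comm _ _ _ (disj_catr D))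
  (local_comm _ _ _ D10_11).
Qed.

Lemma ydivS_10_11 : ydivS [:: true; false] [:: true; true].
Proof. exact: ydivS_trans (ydivS_sym ydivS_0_10) ydivS_0_11. Qed.

(* y_1 y_0^{-1} = x_1 . y_{10} y_{110}^{-1} . y_{111} y_0^{-1}. *)
Lemma ydivS_0_1 : ydivS [:: false] [:: true].
Proof.
apply: ydivS_sym.
have F := Sbij_comp (Sbij_comp (Sbij_x [:: true]) (ydivS_w0_w10 [:: true]))
  (ydivS_sym ydivS_0_111).
apply: Sbij_ext F _ (ydivK _ _) (ydivK _ _) => x.
by rewrite (ydiv_expand [:: true]).
Qed.

Lemma ydivS_siblings w : ydivS (w ++ [:: false]) (w ++ [:: true]).
Proof.
have [->|Hw] := eqVneq w [::]; first exact: ydivS_0_1.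
apply: ydivS_transport (cone_equiv_true Hw) _ ydivS_10_11.
exact: disj_independent.
Qed.

Lemma ydivS_extend1 v t : disj t v -> ydivS v t -> ydivS (v ++ [:: true]) t.
Proof.
move=> D Hvt.
have H11 : ydivS (v ++ [:: true; true]) t.
  apply: Sbij_solve_outer (Sbij_comp (Sbij_x v) (ydivS_w0_w10 v)) Hvt _
    (ydivK _ _) (ydivK _ _).
  exact: ydiv_expand.
have X1 := maps_cone_inv (Sbij_x v) (maps_cone_local v xmap_1).
exact: ydivS_conj (Sbij_sym (Sbij_x v)) X1 (maps_cone_disj _ D) (disj_catl (disj_sym D)) H11.
Qed.

Lemma ydivS_extend0 v t : disj t v -> ydivS v t -> ydivS (v ++ [:: false]) t.
Proof.
move=> D Hvt.
have S1 := ydivS_sym (ydivS_siblings (v ++ [:: true])); rewrite -!catA in S1.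
apply: Sbij_solve_middle (Sbij_x v) S1 Hvt _ (ydivK _ _) (ydivK _ _).
by move=> x; apply: ydiv_expand_disj.
Qed.

Lemma ydivS_extend q v t : disj t v -> ydivS v t -> ydivS (v ++ q) t.
Proof.
elim: q v => [|b q IH] v D Hvt; first by rewrite cats0.
rewrite -cat1s catA; apply: IH; first exact: disj_catr.
by case: b; [exact: ydivS_extend1 | exact: ydivS_extend0].
Qed.

Lemma ydivS_extend2 v w p q : disj v w -> ydivS v w -> ydivS (v ++ p) (w ++ q).
Proof.
move=> D Hvw; apply: ydivS_sym; apply: ydivS_extend; first exact: disj_catl.
exact: ydivS_sym (ydivS_extend p (disj_sym D) Hvw).
Qed.

Theorem lemma6p7 (s t : seq bool) :
  ~~ prefix s t -> ~~ prefix t s ->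
  inS (fun xi => local t ymap_inv (local s ymap xi)).
Proof.
move=> Hst Hts; have [u [a [s' [t' [-> ->]]]]] := split_independent Hst Hts.
have D : disj (u ++ [:: a]) (u ++ [:: ~~ a]).
  by apply/disj_pfx/disj_independent; case: (a).
have Hsib : ydivS (u ++ [:: a]) (u ++ [:: ~~ a]).
  by case: (a); [exact: ydivS_sym (ydivS_siblings u) | exact: ydivS_siblings].
by case: (ydivS_extend2 s' t' D Hsib); rewrite -!catA.
Qed.
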